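(* Every ordered graph $F$ on $k$ vertices that does not contain a monotone path of length two satisfies $\rho_{<}(F)\le\rho_{<}(H_k)$.
   Context: An ordered graph is a graph with a totally ordered vertex set. An ordered graph $G$ contains $F$ if there is an injective order-preserving map $V(F)\to V(G)$ sending edges to edges; otherwise $G$ is $F$-free. $\rho_{<}(F,G)=\max\{e(G')/e(G): G'\subseteq G,\ G'\ F\text{-free}\}$ and $\rho_{<}(F)=\inf_G\rho_{<}(F,G)$ over all ordered graphs $G$. A monotone path of length two consists of vertices $u<v<w$ with $uv,vw$ edges. $H_k$ is the ordered graph on $[k]\times\{0,1\}$, ordered lexicographically, with edge set $\{(x,0)(y,1): x\le y\}$. *)

From mathcomp Require Import all_boot all_order all_algebra.
From mathcomp Require Import classical_sets reals.
Set Implicit Arguments. Unset Strict Implicit. Unset Printing Implicit Defensive.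
Import Order.TTheory GRing.Theory Num.Theory.

(* An ordered graph: vertex set 'I_n with its natural order.  Every ordered
   graph is isomorphic (as an ordered graph) to exactly one of these.
   The edge {u,v} with u < v is stored as the pair (u,v); pairs (u,v) with
   ~ (u < v) in [oraw] are ignored. *)
Record ograph := OGraph { nv : nat; oraw : {set 'I_nv * 'I_nv} }.

Definition edges (G : ograph) : {set 'I_(nv G) * 'I_(nv G)} :=
  [set p in oraw G | (p.1 < p.2)%N].

Definition ne (G : ograph) : nat := #|edges G|.

Definition contains (F : ograph) (n : nat) (S : {set 'I_n})
    (E : {set 'I_n * 'I_n}) : bool :=
  [exists f : {ffun 'I_(nv F) -> 'I_n},
    [&& [forall i : 'I_(nv F), forall j : 'I_(nv F), (i < j)%N ==> (f i < f j)%N],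
        [forall i, f i \in S] &
        [forall p in edges F, (f p.1, f p.2) \in E]]].

Definition is_subgraph (G : ograph) (S : {set 'I_(nv G)})
    (E : {set 'I_(nv G) * 'I_(nv G)}) : bool :=
  (E \subset edges G) && [forall p in E, (p.1 \in S) && (p.2 \in S)].

(* maximum number of edges of an F-free subgraph of G (0 if none exists) *)
Definition maxfree (F G : ograph) : nat :=
  \max_(S : {set 'I_(nv G)})
    \max_(E : {set 'I_(nv G) * 'I_(nv G)} |
            is_subgraph S E && ~~ contains F S E) #|E|.

(* rho_<(F,G) = max e(G')/e(G), for G with at least one edge *)
Definition rho_FG (R : realType) (F G : ograph) : R :=
  ((maxfree F G)%:R / (ne G)%:R)%R.

Definition rho (R : realType) (F : ograph) : R :=
  inf [set rho_FG R F G | G in [set G : ograph | (0 < ne G)%N]].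

Definition has_mpath2 (F : ograph) : Prop :=
  exists u v w : 'I_(nv F),
    (u, v) \in edges F /\ (v, w) \in edges F.

(* H_k on [k] x {0,1} (lex order), encoded via the order isomorphism
   (x, b) |-> 2x + b onto 'I_(2k) (x 0-based): edge (x,0)(y,1) iff x <= y. *)
Definition H (k : nat) : ograph :=
  @OGraph (k.*2) [set p : 'I_(k.*2) * 'I_(k.*2) |
     [&& ~~ odd p.1, odd p.2 & ((p.1)./2 <= (p.2)./2)%N]].

From mathcomp Require Import all_boot all_order all_algebra.
From mathcomp Require Import classical_sets reals.
Import Order.TTheory GRing.Theory Num.Theory.
From mathcomp Require Import zify.

Set Implicit Arguments.
Unset Strict Implicit.
Unset Printing Implicit Defensive.

(* A graph without a monotone path of length two has every vertex on only one
   side of its edges: it is either the upper end of no edge or the lower end of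
   no edge.  Sending vertex i to (i, 1) in the second case and to (i, 0) in the
   first embeds F into H_k, since an edge uv with u < v goes to (u,0)(v,1).
   Containment is transitive, so every H_k-free subgraph of G is F-free; hence
   rho_<(F,G) <= rho_<(H_k,G) for every G, and the same holds for the infima. *)

Local Open Scope classical_set_scope.

Definition embeds (F F' : ograph) : bool :=
  contains F [set: 'I_(nv F')] (edges F').

Lemma contains_trans (F F' : ograph) n (S : {set 'I_n}) (E : {set 'I_n * 'I_n}) :
  embeds F F' -> contains F' S E -> contains F S E.
Proof.
case/existsP => f /and3P [/forallP f_mono _ /forallP f_edge].
case/existsP => h /and3P [/forallP h_mono /forallP h_in /forallP h_edge].
apply/existsP; exists [ffun i => h (f i)]; apply/and3P; split.
- apply/forallP => i; apply/forallP => j; apply/implyP => ij; rewrite !ffunE.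
  have fij : (f i < f j)%N by move/forallP/(_ j)/implyP: (f_mono i); apply.
  by move/forallP/(_ (f j))/implyP: (h_mono (f i)); apply.
- by apply/forallP => i; rewrite ffunE h_in.
- apply/forallP => p; apply/implyP => pE; rewrite !ffunE.
  by move/implyP: (h_edge (f p.1, f p.2)); apply; move/implyP: (f_edge p); apply.
Qed.

Lemma maxfree_embeds (F F' G : ograph) :
  embeds F F' -> (maxfree F G <= maxfree F' G)%N.
Proof.
move=> FF'; apply/bigmax_leqP => S _; apply/bigmax_leqP => E /andP [subE F_free].
apply: leq_trans (leq_bigmax S); apply: leq_bigmax_cond.
by rewrite subE /=; apply: contra F_free; apply: contains_trans.
Qed.

Lemma rho_FG_ge0 (R : realType) (F G : ograph) : (0 <= rho_FG R F G)%R.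
Proof. by rewrite /rho_FG divr_ge0 ?ler0n. Qed.

Lemma rho_FG_embeds (R : realType) (F F' G : ograph) :
  embeds F F' -> (rho_FG R F G <= rho_FG R F' G)%R.
Proof.
move=> FF'; rewrite /rho_FG ler_wpM2r ?invr_ge0 ?ler0n // ler_nat.
exact: maxfree_embeds.
Qed.

Lemma rho_le (R : realType) (F F' : ograph) :
  (forall G, rho_FG R F G <= rho_FG R F' G)%R -> (rho R F <= rho R F')%R.
Proof.
move=> le_FF'; apply: lb_le_inf.
- pose K2 := @OGraph 2 [set (ord0, ord_max)].
  have K2_edge : (0 < ne K2)%N.
    by rewrite card_gt0; apply/set0Pn; exists (ord0, ord_max); rewrite !inE eqxx.
  by exists (rho_FG R F' K2), K2.
- have lbound : has_lbound [set rho_FG R F G | G in [set G | (0 < ne G)%N]].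
    by exists 0%R => _ [G _ <-]; apply: rho_FG_ge0.
  move=> _ [G G_edge <-]; apply: le_trans (le_FF' G).
  by apply: (ge_inf lbound); exists G.
Qed.

Section Mpath2Free.
Variable F : ograph.
Hypothesis F_free : ~ has_mpath2 F.

Definition is_upper_end (i : 'I_(nv F)) : bool := [exists p in edges F, p.2 == i].

Lemma edge_ends (p : 'I_(nv F) * 'I_(nv F)) :
  p \in edges F -> is_upper_end p.2 && ~~ is_upper_end p.1.
Proof.
move=> pE; apply/andP; split; first by apply/existsP; exists p; rewrite pE eqxx.
apply/negP => /exists_inP [q qE /eqP q2].
apply: F_free; exists q.1, p.1, p.2.
by rewrite -surjective_pairing -q2 -surjective_pairing.
Qed.

Lemma lex_index_lt (i : 'I_(nv F)) : ((i : nat).*2 + is_upper_end i < (nv F).*2)%N.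
Proof. by have := ltn_ord i; case: (is_upper_end i) => /=; lia. Qed.

Definition lex_index (i : 'I_(nv F)) : 'I_(nv (H (nv F))) := Ordinal (lex_index_lt i).

Lemma embeds_H : embeds F (H (nv F)).
Proof.
apply/existsP; exists [ffun i => lex_index i]; apply/and3P; split.
- apply/forallP => i; apply/forallP => j; apply/implyP => ij; rewrite !ffunE /=.
  by case: (is_upper_end i); case: (is_upper_end j) => /=; lia.
- by apply/forallP => i; rewrite inE.
- apply/forallP => p; apply/implyP => pE; rewrite !ffunE.
  have /andP [up2 /negbTE low1] := edge_ends pE.
  move: pE; rewrite !inE /= up2 low1 addn0 addn1 odd_double /= odd_double.
  rewrite doubleK uphalf_double => /andP [_ lt12].
  by rewrite (ltnW lt12) /=; lia.
Qed.

End Mpath2Free.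

Theorem corollary4p2 (R : realType) (F : ograph) :
  ~ has_mpath2 F -> (rho R F <= rho R (H (nv F)))%R.
Proof.
move=> F_free; apply: rho_le => G.
exact/rho_FG_embeds/embeds_H.
Qed.
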